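(* Let $\alpha\geq1$, $N>0$, $B_N(x_1,x_2,x_3):=(\sin Nx_3,\cos Nx_3,0)$ and $\phi(x):=(1+|x|^2)^{-\alpha}$ on $\mathbb{R}^3$, and let $\omega_0^1:=\mathop{\mathrm{curl}}\mathop{\mathrm{curl}}(\phi B_N)$. If $N$ is sufficiently large compared with $\alpha$ ($N\gg\alpha$), then $\omega_0^1$ has no zeros on $\mathbb{R}^3$. *)

From Stdlib Require Import Reals.
From Coquelicot Require Import Coquelicot.
Open Scope R_scope.

Record vec3 := V3 { v1 : R; v2 : R; v3 : R }.
Definition vfield := R -> R -> R -> vec3.

Definition d1 (f : R -> R -> R -> R) (x y z : R) : R := Derive (fun t => f t y z) x.
Definition d2 (f : R -> R -> R -> R) (x y z : R) : R := Derive (fun t => f x t z) y.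
Definition d3 (f : R -> R -> R -> R) (x y z : R) : R := Derive (fun t => f x y t) z.

Definition curl (F : vfield) : vfield := fun x y z =>
  let F1 := fun a b c => v1 (F a b c) in
  let F2 := fun a b c => v2 (F a b c) in
  let F3 := fun a b c => v3 (F a b c) in
  V3 (d2 F3 x y z - d3 F2 x y z)
     (d3 F1 x y z - d1 F3 x y z)
     (d1 F2 x y z - d2 F1 x y z).

Definition B_N (N : R) : vfield := fun x y z => V3 (sin (N * z)) (cos (N * z)) 0.

Definition phi (alpha : R) (x y z : R) : R :=
  Rpower (1 + (x ^ 2 + y ^ 2 + z ^ 2)) (- alpha).

Definition phiB (alpha N : R) : vfield := fun x y z =>
  let b := B_N N x y z in
  V3 (phi alpha x y z * v1 b) (phi alpha x y z * v2 b) (phi alpha x y z * v3 b).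

Definition omega01 (alpha N : R) : vfield := curl (curl (phiB alpha N)).

From Pilot Require Import Defs.
From Stdlib Require Import Reals Lra Psatz FunctionalExtensionality.
From Coquelicot Require Import Coquelicot.
Open Scope R_scope.

(** The field omega = curl curl (phi B_N) is detected by its component along
    B_N = (sin N z, cos N z, 0).  Writing U = 1 + |x|^2, a direct computation
    gives omega . B_N = phi (N^2 + 4 alpha / U - 4 alpha (alpha + 1) q / U^2)
    with 0 <= q <= |x|^2, and |x|^2 / U^2 <= 1/4.  Hence omega . B_N > 0 as soon
    as N^2 >= alpha (alpha + 1), which holds for N >= 2 alpha. *)

Definition one_add_norm2 (x y z : R) : R := 1 + (x ^ 2 + y ^ 2 + z ^ 2).

Lemma one_add_norm2_pos (x y z : R) : 0 < one_add_norm2 x y z.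
Proof. unfold one_add_norm2; nra. Qed.

Lemma phi_pos (alpha x y z : R) : 0 < phi alpha x y z.
Proof. apply exp_pos. Qed.

Lemma sqr_rotate_le (x y s c : R) :
  s ^ 2 + c ^ 2 = 1 -> (x * c - y * s) ^ 2 <= x ^ 2 + y ^ 2.
Proof.
  intros Hsc.
  assert (Hlagrange : (x * c - y * s) ^ 2 + (x * s + y * c) ^ 2 = (x ^ 2 + y ^ 2) * (s ^ 2 + c ^ 2))
    by ring.
  rewrite Hsc in Hlagrange.
  pose proof (pow2_ge_0 (x * s + y * c)).
  lra.
Qed.

(* The side conditions of [auto_derive] say that the argument of [ln] in [phi]
   is positive (hence nonzero). *)
Ltac rewrite_Derive :=
  erewrite is_derive_unique;
  [| auto_derive; repeat split;
     try apply (one_add_norm2_pos _ _ _);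
     try apply Rgt_not_eq, (one_add_norm2_pos _ _ _);
     reflexivity].

Lemma curl_phiB (alpha N : R) :
  curl (phiB alpha N) = fun x y z =>
    V3 (phi alpha x y z * (N * sin (N * z) + 2 * alpha * z * cos (N * z) / one_add_norm2 x y z))
       (phi alpha x y z * (N * cos (N * z) - 2 * alpha * z * sin (N * z) / one_add_norm2 x y z))
       (phi alpha x y z * (2 * alpha * (y * sin (N * z) - x * cos (N * z))) / one_add_norm2 x y z).
Proof.
  apply functional_extensionality; intro x.
  apply functional_extensionality; intro y.
  apply functional_extensionality; intro z.
  unfold curl, phiB, B_N; cbv zeta; cbn [v1 v2 v3].
  unfold Defs.d1, Defs.d2, Defs.d3, phi, Rpower, one_add_norm2.
  repeat rewrite_Derive.
  pose proof (one_add_norm2_pos x y z) as Hu; unfold one_add_norm2 in Hu.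
  f_equal; cbn [pow]; field; lra.
Qed.

Lemma omega01_dot_B_N (alpha N x y z : R) :
  v1 (omega01 alpha N x y z) * sin (N * z) + v2 (omega01 alpha N x y z) * cos (N * z)
  = phi alpha x y z *
      (N ^ 2 + 4 * alpha / one_add_norm2 x y z
       - 4 * alpha * (alpha + 1) * (z ^ 2 + (x * cos (N * z) - y * sin (N * z)) ^ 2)
           / one_add_norm2 x y z ^ 2).
Proof.
  (* The identity only holds modulo sin^2 + cos^2 = 1: the difference of the
     two sides is the following multiple of sin^2 + cos^2 - 1. *)
  apply Rminus_diag_uniq.
  transitivity (phi alpha x y z * (sin (N * z) ^ 2 + cos (N * z) ^ 2 - 1)
                * (N ^ 2 + 4 * alpha / one_add_norm2 x y z
                   - 4 * alpha * (alpha + 1) * z ^ 2 / one_add_norm2 x y z ^ 2)).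
  - unfold omega01; rewrite curl_phiB.
    unfold curl; cbv zeta; cbn [v1 v2 v3].
    unfold Defs.d1, Defs.d2, Defs.d3, phi, Rpower, one_add_norm2.
    repeat rewrite_Derive.
    pose proof (one_add_norm2_pos x y z) as Hu; unfold one_add_norm2 in Hu.
    cbn [pow]; field; lra.
  - rewrite <- (sin2_cos2 (N * z)); unfold Rsqr; ring.
Qed.

Lemma omega01_dot_B_N_pos (alpha N x y z : R) :
  0 < alpha -> alpha * (alpha + 1) <= N ^ 2 ->
  0 < v1 (omega01 alpha N x y z) * sin (N * z) + v2 (omega01 alpha N x y z) * cos (N * z).
Proof.
  intros Ha HN.
  rewrite omega01_dot_B_N.
  apply Rmult_lt_0_compat; [apply phi_pos |].
  pose proof (one_add_norm2_pos x y z) as HU0.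
  set (U := one_add_norm2 x y z) in *.
  set (q := z ^ 2 + (x * cos (N * z) - y * sin (N * z)) ^ 2).
  assert (Hq : 0 <= q <= U - 1).
  { unfold q, U, one_add_norm2; split.
    - apply Rplus_le_le_0_compat; apply pow2_ge_0.
    - assert (Hsc : sin (N * z) ^ 2 + cos (N * z) ^ 2 = 1)
        by (rewrite <- (sin2_cos2 (N * z)); unfold Rsqr; ring).
      pose proof (sqr_rotate_le x y (sin (N * z)) (cos (N * z)) Hsc).
      lra. }
  assert (H4q : 4 * q <= U ^ 2) by (pose proof (pow2_ge_0 (U - 2)); nra).
  replace (N ^ 2 + 4 * alpha / U - 4 * alpha * (alpha + 1) * q / U ^ 2)
    with ((N ^ 2 * U ^ 2 + 4 * alpha * U - 4 * alpha * (alpha + 1) * q) / U ^ 2)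
    by (field; lra).
  apply Rdiv_lt_0_compat; [| nra].
  assert (alpha * (alpha + 1) * (4 * q) <= N ^ 2 * U ^ 2) by nra.
  nra.
Qed.

Theorem proposition4p1 :
  exists C : R, 0 < C /\
    forall alpha N : R, 1 <= alpha -> 0 < N -> C * alpha <= N ->
      forall x y z : R, omega01 alpha N x y z <> V3 0 0 0.
Proof.
  exists 2; split; [lra |].
  intros alpha N Ha _ HC x y z Hzero.
  assert (Hdot : alpha * (alpha + 1) <= N ^ 2) by nra.
  assert (Hpos : 0 < alpha) by lra.
  pose proof (omega01_dot_B_N_pos alpha N x y z Hpos Hdot) as Hdot_pos.
  rewrite Hzero in Hdot_pos; cbn [v1 v2] in Hdot_pos.
  lra.
Qed.
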